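(* Let $1\le p<\infty$ and let $\boldsymbol{w(k)}=(w_n(k))_{n\in\mathbb{N}}$, $k\in\mathbb{N}$, be countably many weights such that each $B_{\boldsymbol{w(k)}}$ is a continuous frequently hypercyclic operator on the complex Banach space $\ell_p$. Assume that $\bigcap_{k\ge1}FHC(B_{\boldsymbol{w(k)}})\neq\emptyset$. Then for all $i,j\ge1$ with $i\ne j$ and for every $0<\varepsilon<1$, there exist increasing sequences $(m_{i,j,l})_{l\in\mathbb{N}}$, $(n_{i,j,l})_{l\in\mathbb{N}}$ of positive integers tending to infinity, with $\liminf_{l\to\infty}n_{i,j,l}/m_{i,j,l}>0$ and $\limsup_{l\to\infty}n_{i,j,l}/m_{i,j,l}<\varepsilon$, such that \[ \sum_{l\ge1}\frac{|W_{m_{i,j,l}}(i)|^p}{|W_{m_{i,j,l}}(j)|^p\,|W_{m_{i,j,l}-n_{i,j,l}}(i)|^p}<\infty . \]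
   Context: $\ell_p$ is the space of complex sequences $(x_n)_{n\ge0}$ with finite $\|x\|_p$, unit vectors $(e_n)_{n\ge0}$. A weight is a bounded sequence of nonzero complex numbers; $B_{\boldsymbol w}e_0=0$, $B_{\boldsymbol w}e_n=w_ne_{n-1}$. $W_n(k)=w_1(k)\cdots w_n(k)$, $W_0(k)=1$. $FHC(T)$ is the set of vectors $x$ such that for every nonempty open $U$, $\{n:T^nx\in U\}$ has positive lower density; $T$ is frequently hypercyclic if $FHC(T)\ne\emptyset$. *)

From mathcomp Require Import all_boot all_order all_algebra.
From mathcomp Require Import all_classical all_reals all_analysis.
From mathcomp Require Import complex.
Import Order.TTheory GRing.Theory Num.Theory.
Import numFieldNormedType.Exports.
Local Open Scope ring_scope.
Local Open Scope classical_set_scope.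

Section LpDefs.
Context {R : realType}.

Definition cmod (z : R[i]) : R := ComplexField.Normc.normc z.

Definition lp (p : R) : set (nat -> R[i]) :=
  [set x | cvgn (series (fun n => cmod (x n) `^ p : R) : R^nat)].

Definition lp_norm (p : R) (x : nat -> R[i]) : R :=
  (limn (series (fun n => cmod (x n) `^ p : R) : R^nat)) `^ p^-1.

Definition lp_open (p : R) (U : set (nat -> R[i])) : Prop :=
  U `<=` lp p /\
  forall y, U y -> exists2 r : R, 0 < r &
    forall z, lp p z -> lp_norm p (fun n => z n - y n) < r -> U z.

(* a weight: bounded sequence of nonzero complex numbers (indices n >= 1
   are the ones used by the shift) *)
Definition weight (w : nat -> R[i]) : Prop :=
  (forall n, (1 <= n)%N -> w n != 0) /\
  exists M : R, forall n, cmod (w n) <= M.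

(* weighted backward shift: B e_0 = 0, B e_n = w_n e_{n-1},
   i.e. (B x)_n = w_{n+1} x_{n+1} *)
Definition bshift (w : nat -> R[i]) (x : nat -> R[i]) : nat -> R[i] :=
  fun n => w n.+1 * x n.+1.

Definition Wprod (w : nat -> R[i]) (n : nat) : R[i] :=
  \prod_(1 <= k < n.+1) w k.

Definition lower_density (A : set nat) : \bar R :=
  limn_einf (fun N : nat =>
    ((#|[set n : 'I_N | `[< A (nat_of_ord n) >]]|)%:R / N%:R : R)%:E).

Definition FHC (p : R) (T : (nat -> R[i]) -> (nat -> R[i])) :
    set (nat -> R[i]) :=
  [set x | lp p x /\
     forall U, lp_open p U -> U !=set0 ->
       (0 < lower_density [set n | U (iter n T x)])%E].

Definition lp_continuous (p : R) (T : (nat -> R[i]) -> (nat -> R[i])) :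
    Prop :=
  (forall x, lp p x -> lp p (T x)) /\
  forall x, lp p x -> forall e : R, 0 < e -> exists2 d : R, 0 < d &
    forall y, lp p y -> lp_norm p (fun n => y n - x n) < d ->
      lp_norm p (fun n => T y n - T x n) < e.

End LpDefs.

(* Fix x in the common set of frequently hypercyclic vectors.  A set of
   positive lower density has bounded gaps: for some K, every interval
   [N, K N) with N large meets it.  Let m range over the times at which the
   B_w(j)-orbit of x has 0th coordinate within 1/2 of 1, so that
   |W_m(j) x_m| > 1/2, and let n_l be a time at which every coordinate of the
   B_w(i)-orbit is below d_l = 2^(-l/p); at coordinate m - n this reads
   |W_m(i) / W_(m-n)(i)| |x_m| < d_l.  Choosing n_l increasing and then
   m_l in [c n_l, K c n_l) with c > 1/eps keeps n_l/m_l between 1/(Kc) and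
   1/c, and bounds the l-th term of the series by 2^p 2^(-l). *)

From mathcomp Require Import all_boot all_order all_algebra.
From mathcomp Require Import all_classical all_reals all_analysis.
From mathcomp Require Import complex.
From mathcomp Require Import ring lra.
Import Order.TTheory GRing.Theory Num.Theory.
Import numFieldNormedType.Exports.
Local Open Scope ring_scope.
Local Open Scope classical_set_scope.

Section Cmod.
Context {R : realType}.
Implicit Types z y : R[i].

Lemma cmod_ge0 z : 0 <= cmod z.
Proof. by case: z => a b; exact: sqrtr_ge0. Qed.

Lemma cmodM z y : cmod (z * y) = cmod z * cmod y.
Proof. exact: ComplexField.Normc.normcM. Qed.

Lemma cmodD z y : cmod (z + y) <= cmod z + cmod y.
Proof. exact: le_normcD. Qed.

Lemma cmodN z : cmod (- z) = cmod z.
Proof. exact: normcN. Qed.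

Lemma cmod0 : cmod (0 : R[i]) = 0.
Proof. exact: ComplexField.Normc.normc0. Qed.

Lemma cmod1 : cmod (1 : R[i]) = 1.
Proof. exact: ComplexField.Normc.normc1. Qed.

Lemma cmodB z y : cmod (z - y) <= cmod z + cmod y.
Proof. by rewrite -(cmodN y) cmodD. Qed.

End Cmod.

Lemma series_cvg_geometric_le (R : realType) (u : R^nat) (C r : R) :
  0 <= r < 1 -> (forall n, 0 <= u n) -> (forall n, u n <= C * r ^+ n) ->
  cvgn (series u).
Proof.
move=> /andP[r0 r1] u0 uC; apply: (series_le_cvg u0 _ uC).
- by move=> n; exact: le_trans (uC n).
- by apply: is_cvg_geometric_series; rewrite ger0_norm.
Qed.

Section WeightedShift.
Context {R : realType}.
Variables w x : nat -> R[i].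

Lemma iter_bshift n k :
  iter n (bshift w) x k = (\prod_(k.+1 <= t < (n + k).+1) w t) * x (n + k)%N.
Proof.
elim: n k => [|n IH] k /=; first by rewrite big_geq ?mul1r.
rewrite /bshift IH addnS -addSn mulrA; congr (_ * _).
by rewrite [in RHS]big_ltn // ltnS addSn ltnS leq_addl.
Qed.

Lemma Wprod_iter_bshift {n m} : (n <= m)%N ->
  Wprod w (m - n)%N * iter n (bshift w) x (m - n)%N = Wprod w m * x m.
Proof.
move=> nm; rewrite iter_bshift subnKC // mulrA /Wprod -big_cat_nat //.
by rewrite ltnS leq_subr.
Qed.

Lemma iter_bshift_coord0 m : iter m (bshift w) x 0 = Wprod w m * x m.
Proof. by rewrite -(Wprod_iter_bshift (leqnn m)) subnn /Wprod big_geq ?mul1r. Qed.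

End WeightedShift.

Section Lp.
Context {R : realType}.
Variable p : R.
Hypothesis p_gt0 : 0 < p.

Lemma ler_powR2r {a b : R} : 0 <= a -> a <= b -> a `^ p <= b `^ p.
Proof.
move=> a0 ab; apply: (ge0_ler_powR (ltW p_gt0) _ _ ab); rewrite nnegrE //.
exact: le_trans ab.
Qed.

(* No positivity of [b] is needed: for [b = 0] the left side is [a `^ p / 0 = 0]. *)
Lemma powR_divr_le (a b d : R) :
  0 <= a -> 0 <= b -> 0 <= d -> a <= d * b -> a `^ p / b `^ p <= d `^ p.
Proof.
move=> a0 b0 d0 adb; have [->|bn0] := eqVneq b 0.
  by rewrite powR0 ?gt_eqF // invr0 mulr0 powR_ge0.
rewrite ler_pdivrMr ?powR_gt0 ?lt_neqAle 1?eq_sym ?bn0 // -powRM //.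
exact: ler_powR2r.
Qed.

Lemma lp_geometric_le (x : nat -> R[i]) (C r : R) : 0 <= r < 1 ->
  (forall n, cmod (x n) `^ p <= C * r ^+ n) -> lp p x.
Proof. by move=> r01; apply: series_cvg_geometric_le r01 _ => n; exact: powR_ge0. Qed.

Lemma lp_sub {z y : nat -> R[i]} : lp p z -> lp p y -> lp p (fun n => z n - y n).
Proof.
move=> lz ly.
have cvg_dom : cvgn (series ((2 `^ p) *:
    ((fun n => cmod (z n) `^ p) + (fun n => cmod (y n) `^ p)))).
  exact/is_cvg_seriesZ/is_cvg_seriesD.
apply: series_le_cvg cvg_dom => [n|n|n]; rewrite ?/GRing.scale /=.
- exact: powR_ge0.
- by rewrite mulr_ge0 ?addr_ge0 ?powR_ge0.
set a := cmod (z n); set b := cmod (y n).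
have a0 : 0 <= a by exact: cmod_ge0.
have b0 : 0 <= b by exact: cmod_ge0.
have le_max2 : cmod (z n - y n) <= 2 * Num.max a b.
  apply: le_trans (cmodB _ _) _; rewrite mulr2n mulrDl mul1r.
  by apply: lerD; rewrite le_max lexx ?orbT.
change (cmod (z n - y n) `^ p <= 2 `^ p * (a `^ p + b `^ p)).
apply: (le_trans (ler_powR2r (cmod_ge0 _) le_max2)).
rewrite powRM ?le_max ?a0 //; apply: ler_wpM2l; first exact: powR_ge0.
by case: (leP a b) => _; rewrite ?lerDl ?lerDr powR_ge0.
Qed.

Lemma cmod_le_lp_norm {v : nat -> R[i]} : lp p v -> forall k, cmod (v k) <= lp_norm p v.
Proof.
move=> lv k; rewrite /lp_norm; set S := series _.
have S_nd : nondecreasing_seq S.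
  by apply: nondecreasing_series => n _ _; exact: powR_ge0.
have vk_le : cmod (v k) `^ p <= limn S.
  apply: le_trans (nondecreasing_cvgn_le S_nd lv k.+1).
  by rewrite /S seriesSr lerDr sumr_ge0 // => n _; exact: powR_ge0.
have -> : cmod (v k) = (cmod (v k) `^ p) `^ p^-1.
  by rewrite -powRrM mulfV ?gt_eqF // powRr1 // cmod_ge0.
apply: (ge0_ler_powR _ _ _ vk_le); rewrite ?nnegrE ?invr_ge0 ?(ltW p_gt0) ?powR_ge0 //.
exact: le_trans (powR_ge0 _ _) vk_le.
Qed.

Definition coord0_near1 : set (nat -> R[i]) :=
  [set y | lp p y /\ cmod (y 0%N - 1) < 2^-1].

(* The slack [s < d] is what makes [sup_lt d] open in l_p. *)
Definition sup_lt (d : R) : set (nat -> R[i]) :=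
  [set y | lp p y /\ exists2 s, s < d & forall k, cmod (y k) <= s].

Lemma lp_open_coord0_near1 : lp_open p coord0_near1.
Proof.
split=> [y []//|y [ly y0]].
exists (2^-1 - cmod (y 0%N - 1)) => [|z lz zy]; first by rewrite subr_gt0.
split=> //; have := cmod_le_lp_norm (lp_sub lz ly) 0 => /= z0y0.
have := cmodD (z 0%N - y 0%N) (y 0%N - 1); rewrite addrA subrK.
move: zy; rewrite ltrBrDr; lra.
Qed.

Lemma lp_open_sup_lt d : lp_open p (sup_lt d).
Proof.
split=> [y []//|y [ly [s sd ys]]].
exists (d - s) => [|z lz zy]; first by rewrite subr_gt0.
split=> //; exists (s + lp_norm p (fun n => z n - y n)); first by rewrite -ltrBrDl.
move=> k; have := cmod_le_lp_norm (lp_sub lz ly) k => /= zkyk.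
have := cmodD (z k - y k) (y k); rewrite subrK.
by have := ys k; lra.
Qed.

Lemma coord0_near1_e0 : coord0_near1 (fun n => if n is 0%N then 1 else 0).
Proof.
split; last by rewrite subrr cmod0 invr_gt0 ltr0n.
apply: (@lp_geometric_le _ 1 0) => [|[|n]]; rewrite ?lexx ?ltr01 //.
  by rewrite cmod1 powR1 expr0 mulr1.
by rewrite cmod0 powR0 ?gt_eqF // expr0n mulr0.
Qed.

Lemma sup_lt_0 {d} : 0 < d -> sup_lt d (fun=> 0).
Proof.
move=> d0; split; last by exists 0 => // k; rewrite cmod0.
apply: (@lp_geometric_le _ 0 0) => [|n]; rewrite ?lexx ?ltr01 //.
by rewrite cmod0 powR0 ?gt_eqF // mul0r.
Qed.

Lemma Wprod_ratio_le {wi wj x : nat -> R[i]} {m n d} : (n <= m)%N ->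
  sup_lt d (iter n (bshift wi) x) -> coord0_near1 (iter m (bshift wj) x) ->
  cmod (Wprod wi m) `^ p /
    (cmod (Wprod wj m) `^ p * cmod (Wprod wi (m - n)%N) `^ p) <= (2 * d) `^ p.
Proof.
move=> nm [_ [s sd ys]] [_]; rewrite iter_bshift_coord0 => near1.
set y := iter n (bshift wi) x (m - n)%N.
set a := cmod (Wprod wi m); set b := cmod (Wprod wj m).
set c := cmod (Wprod wi (m - n)%N); set X := cmod (x m).
have cy_aX : c * cmod y = a * X by rewrite -!cmodM Wprod_iter_bshift.
have bX_gt : 1 < 2 * (b * X).
  have := cmodD (Wprod wj m * x m) (1 - Wprod wj m * x m).
  rewrite addrC subrK cmod1 cmodM -/b -/X -[cmod (1 - _)]cmodN opprB.
  by move: near1; rewrite -div1r; lra.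
have y_le : cmod y <= d by have := ys (m - n)%N; lra.
have [a0 b0 c0 X0] : [/\ 0 <= a, 0 <= b, 0 <= c & 0 <= X] by split; exact: cmod_ge0.
rewrite -powRM //; apply: powR_divr_le; rewrite ?mulr_ge0 //.
  by have := cmod_ge0 y; lra.
have a_le : a <= a * (2 * (b * X)) by rewrite ler_peMr // ltW.
apply: (le_trans a_le); rewrite (_ : a * _ = 2 * b * (c * cmod y)); last first.
  by rewrite cy_aX; ring.
rewrite (_ : 2 * d * _ = 2 * b * (c * d)); last by ring.
by apply: ler_wpM2l; rewrite ?mulr_ge0 ?ler_wpM2l.
Qed.

Lemma Wprod_ratio_summable (wi wj x : nat -> R[i]) (m n : nat -> nat) :
  (forall l, [/\ (n l <= m l)%N,
    sup_lt (((2^-1) ^+ l) `^ p^-1) (iter (n l) (bshift wi) x) &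
    coord0_near1 (iter (m l) (bshift wj) x)]) ->
  cvgn (series (fun l => cmod (Wprod wi (m l)) `^ p /
    (cmod (Wprod wj (m l)) `^ p * cmod (Wprod wi (m l - n l)%N) `^ p))).
Proof.
move=> visits; apply: (@series_cvg_geometric_le _ _ (2 `^ p) 2^-1).
- by rewrite invr_ge0 ler0n invf_lt1 ?ltr1n.
- by move=> l; rewrite divr_ge0 ?mulr_ge0 ?powR_ge0.
move=> l; have [nm Dn Am] := visits l.
apply: (le_trans (Wprod_ratio_le nm Dn Am)).
by rewrite powRM ?ler0n ?powR_ge0 // -powRrM mulVf ?gt_eqF // powRr1 ?exprn_ge0.
Qed.

End Lp.

Section Density.
Context {R : realType}.
Variable A : set nat.

Definition count_lt (N : nat) : nat := (\sum_(0 <= n < N) `[< A n >])%N.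

Lemma count_lt_le N : (count_lt N <= N)%N.
Proof.
rewrite -[X in (_ <= X)%N]subn0 -[X in (_ <= X)%N]muln1 -sum_nat_const_nat.
by apply: leq_sum => n _; exact: leq_b1.
Qed.

Lemma count_lt_gap {N M} : (N <= M)%N ->
  (forall a, (N <= a < M)%N -> ~ A a) -> count_lt M = count_lt N.
Proof.
move=> NM noA; rewrite /count_lt (@big_cat_nat _ _ _ N) //=.
rewrite [X in (_ + X)%N]big1_seq ?addn0 // => a /andP[_].
by rewrite mem_index_iota => /noA Aa; case: asboolP.
Qed.

Lemma card_ord_count_lt N :
  #|[set n : 'I_N | `[< A (nat_of_ord n) >]]| = count_lt N.
Proof.
rewrite -sum1_card big_mkcond /= /count_lt big_mkord.
by apply: eq_bigr => n _; rewrite /in_set unfold_in /= asboolb; case: ifP.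
Qed.

Lemma lower_density_gt0_count : (0 < @lower_density R A)%E ->
  exists2 d : R, 0 < d & exists N0, forall N, (N0 <= N)%N ->
    d * N%:R <= (count_lt N)%:R.
Proof.
rewrite /lower_density; set u := fun N : nat => _.
rewrite limn_einf_lim (cvg_lim _ (@cvg_einfs_sup R u)) //.
move=> /ereal_sup_gt[_ [N0 _ <-]] infs_gt0.
have infs_le N : (N0 <= N)%N -> (einfs u N0 <= u N)%E.
  by move=> N0N; apply: ereal_inf_lbound; exists N.
have := infs_le N0 (leqnn _); move: infs_gt0 infs_le.
case: (einfs u N0) => [d| |] //= d_gt0 d_le _; exists d => //.
exists (maxn N0 1) => N; rewrite geq_max => /andP[N0N N_gt0].
have := d_le N N0N; rewrite /u card_ord_count_lt lee_fin ler_pdivlMr ?ltr0n //.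
Qed.

Lemma lower_density_gt0_gaps : (0 < @lower_density R A)%E ->
  exists K N0 : nat, forall N, (N0 <= N)%N -> exists2 a, A a & (N <= a < K * N)%N.
Proof.
move=> /lower_density_gt0_count[d d_gt0 [N0 countP]].
pose K := (Num.truncn d^-1).+1.
have dK_gt1 : 1 < d * K%:R.
  by rewrite -ltr_pdivrMl // mulr1 -truncn_lt_nat // invr_ge0 ltW.
exists K, (maxn N0 1) => N; rewrite geq_max => /andP[N0N N_gt0].
apply: contrapT => noA.
have N_le_KN : (N <= K * N)%N by rewrite leq_pmull.
have := countP (K * N)%N (leq_trans N0N N_le_KN).
rewrite (count_lt_gap N_le_KN) => [dKN|a aN Aa]; last by apply: noA; exists a.
have := count_lt_le N; rewrite -(ler_nat R) => /(le_trans dKN).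
rewrite natrM mulrA -[X in _ <= X]mul1r ler_pM2r ?ltr0n //.
by rewrite leNgt dK_gt1.
Qed.

End Density.

Lemma gaps_unbounded {A : set nat} {K N0 : nat} :
  (forall N, (N0 <= N)%N -> exists2 a, A a & (N <= a < K * N)%N) ->
  forall b, exists2 a, A a & (b < a)%N.
Proof.
move=> gaps b; have [a Aa /andP[ba _]] := gaps (maxn N0 b.+1) (leq_maxl _ _).
by exists a => //; exact: leq_trans (leq_maxr _ _) ba.
Qed.

Lemma FHC_orbit_gaps {R : realType} {p : R} {T} {x y : nat -> R[i]} {U} :
  FHC p T x -> lp_open p U -> U y ->
  exists K N0 : nat, forall N, (N0 <= N)%N ->
    exists2 a, U (iter a T x) & (N <= a < K * N)%N.
Proof.
move=> [_ visits] openU Uy; apply: (@lower_density_gt0_gaps R).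
exact: visits openU (ex_intro _ y Uy).
Qed.

Lemma interleaved_seq {A : set nat} {D : nat -> set nat} {K N0 c : nat} :
  (1 < c)%N ->
  (forall N, (N0 <= N)%N -> exists2 a, A a & (N <= a < K * N)%N) ->
  (forall l b, exists2 n, D l n & (b < n)%N) ->
  exists n m : nat -> nat, forall l,
    [/\ D l (n l), A (m l), (0 < n l < m l)%N, (m l < n l.+1)%N &
        (c * n l <= m l <= K * c * n l)%N].
Proof.
move=> c_gt1 gaps unbD; have c_gt0 := ltnW c_gt1.
have /choice[fD fDP] : forall lb : nat * nat, exists n, D lb.1 n /\ (lb.2 < n)%N.
  by case=> l b; have [n] := unbD l b; exists n.
have /choice[g gP] : forall N, exists a, (N0 <= N)%N -> A a /\ (N <= a < K * N)%N.
  move=> N; have [/gaps[a Aa aN]|] := leqP N0 N; last by exists 0%N.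
  by exists a.
pose fix n l := if l is l'.+1 then fD (l, g (c * n l')%N) else fD (0, N0).
have N0_lt_n l : (N0 < n l)%N.
  elim: l => [|l IH]; first exact: (fDP (0, N0)).2.
  have N0_le : (N0 <= c * n l)%N by apply: leq_trans (ltnW IH) (leq_pmull _ c_gt0).
  have [_ /andP[cn_le _]] := gP _ N0_le.
  by apply: leq_ltn_trans (leq_trans N0_le cn_le) (fDP (l.+1, _)).2.
exists n, (fun l => g (c * n l)%N) => l.
have N0_le : (N0 <= c * n l)%N by apply: leq_trans (ltnW (N0_lt_n l)) (leq_pmull _ c_gt0).
have n_gt0 : (0 < n l)%N := leq_ltn_trans (leq0n _) (N0_lt_n l).
have [Am /andP[cn_le_m m_lt]] := gP _ N0_le.
split=> //; last by rewrite cn_le_m -mulnA (ltnW m_lt).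
- by case: l {N0_le Am cn_le_m m_lt n_gt0} => [|l]; exact: (fDP (_, _)).1.
- by rewrite n_gt0 (leq_trans _ cn_le_m) // ltn_Pmull.
- exact: (fDP (l.+1, _)).2.
Qed.

Lemma increasing_unbounded (u : nat -> nat) : (forall l, (u l < u l.+1)%N) ->
  forall N, exists L, forall l, (L <= l)%N -> (N <= u l)%N.
Proof.
move=> uS N; have id_le l : (l <= u l)%N.
  by elim: l => // l IH; exact: leq_ltn_trans IH (uS l).
by exists N => l Nl; exact: leq_trans Nl (id_le l).
Qed.

Lemma interleaved_increasing {n m : nat -> nat} :
  (forall l, (0 < n l < m l)%N /\ (m l < n l.+1)%N) ->
  (forall l, (0 < m l)%N /\ (0 < n l)%N) /\
  {homo m : a b / (a < b)%N} /\ {homo n : a b / (a < b)%N} /\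
  (forall N, exists L, forall l, (L <= l)%N -> (N <= m l)%N) /\
  (forall N, exists L, forall l, (L <= l)%N -> (N <= n l)%N).
Proof.
move=> nmP; have n_lt_m l : (n l < m l)%N by case/andP: (nmP l).1.
have n_incr l : (n l < n l.+1)%N := ltn_trans (n_lt_m l) (nmP l).2.
have m_incr l : (m l < m l.+1)%N := ltn_trans (nmP l).2 (n_lt_m l.+1).
split=> [l|]; first by case/andP: (nmP l).1 => n_gt0 nm; rewrite (ltn_trans n_gt0).
split; first exact: homo_ltn ltn_trans m_incr.
split; first exact: homo_ltn ltn_trans n_incr.
by split; apply: increasing_unbounded.
Qed.

Section ExtendedLimits.
Context {R : realType}.
Implicit Types (u : (\bar R)^nat) (a : \bar R).

Lemma limn_einf_ge u a : (forall n, (a <= u n)%E) -> (a <= limn_einf u)%E.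
Proof.
move=> le_au; rewrite limn_einf_lim; apply: lime_ge; first exact: is_cvg_einfs.
by apply: nearW => n; apply: le_ereal_inf_tmp => _ [k _ <-].
Qed.

Lemma limn_esup_le u a : (forall n, (u n <= a)%E) -> (limn_esup u <= a)%E.
Proof.
move=> le_ua; rewrite limn_esup_lim; apply: lime_le; first exact: is_cvg_esups.
by apply: nearW => n; apply: ge_ereal_sup => _ [k _ <-].
Qed.

Lemma ratio_liminf_gt0_limsup_le {n m : nat -> nat} {a b : nat} : (0 < a)%N ->
  (forall l, (0 < n l)%N /\ (a * n l <= m l <= b * n l)%N) ->
  (0 < limn_einf (fun l => ((n l)%:R / (m l)%:R : R)%:E))%E /\
  (limn_esup (fun l => ((n l)%:R / (m l)%:R : R)%:E) <= (a%:R^-1 : R)%:E)%E.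
Proof.
move=> a_gt0 nmP.
have m_gt0 l : (0 < m l)%N.
  by have [n_gt0 /andP[anm _]] := nmP l; apply: leq_trans anm; rewrite muln_gt0 a_gt0.
have b_gt0 : (0 < b)%N.
  by have [_ /andP[_ /(leq_trans (m_gt0 0%N))]] := nmP 0%N; rewrite muln_gt0 => /andP[].
split.
  apply: (@lt_le_trans _ _ (b%:R^-1 : R)%:E); first by rewrite lte_fin invr_gt0 ltr0n.
  apply: limn_einf_ge => l; have [n_gt0 /andP[_ mbn]] := nmP l.
  by rewrite lee_fin ler_pdivlMr ?ltr0n // ler_pdivrMl ?ltr0n // -natrM ler_nat.
apply: limn_esup_le => l; have [n_gt0 /andP[anm _]] := nmP l.
by rewrite lee_fin ler_pdivrMr ?ltr0n // ler_pdivlMl ?ltr0n // -natrM ler_nat.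
Qed.

End ExtendedLimits.

Theorem theorem4p10 (R : realType) (p : R) (w : nat -> nat -> R[i]) :
  1 <= p ->
  (forall k, (1 <= k)%N -> weight (w k)) ->
  (forall k, (1 <= k)%N -> lp_continuous p (bshift (w k))) ->
  (forall k, (1 <= k)%N -> FHC p (bshift (w k)) !=set0) ->
  (\bigcap_(k in [set k : nat | (1 <= k)%N]) FHC p (bshift (w k))) !=set0 ->
  forall i j : nat, (1 <= i)%N -> (1 <= j)%N -> i <> j ->
  forall eps : R, 0 < eps < 1 ->
  exists m n : nat -> nat,
    (forall l, (0 < m l)%N /\ (0 < n l)%N) /\
    {homo m : a b / (a < b)%N} /\ {homo n : a b / (a < b)%N} /\
    (forall N : nat, exists L : nat, forall l, (L <= l)%N -> (N <= m l)%N) /\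
    (forall N : nat, exists L : nat, forall l, (L <= l)%N -> (N <= n l)%N) /\
    (0 < limn_einf (fun l => ((n l)%:R / (m l)%:R : R)%:E))%E /\
    (limn_esup (fun l => ((n l)%:R / (m l)%:R : R)%:E) < eps%:E)%E /\
    cvgn (series (fun l =>
          cmod (Wprod (w i) (m l)) `^ p /
          (cmod (Wprod (w j) (m l)) `^ p *
           cmod (Wprod (w i) (m l - n l)%N) `^ p)) : R^nat).
Proof.
move=> p_ge1 _ _ _ [x FHCx] i j i_ge1 j_ge1 _ eps /andP[eps_gt0 _].
have p_gt0 : 0 < p := lt_le_trans ltr01 p_ge1.
pose d l : R := ((2^-1) ^+ l) `^ p^-1.
have d_gt0 l : 0 < d l by rewrite powR_gt0 // exprn_gt0 // invr_gt0.
have [K [N0 gaps_j]] := FHC_orbit_gaps (FHCx j j_ge1)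
  (lp_open_coord0_near1 p p_gt0) (coord0_near1_e0 p p_gt0).
have unbounded_i l : forall b, exists2 n,
    sup_lt p (d l) (iter n (bshift (w i)) x) & (b < n)%N.
  have [K' [N0' gaps_i]] := FHC_orbit_gaps (FHCx i i_ge1)
    (lp_open_sup_lt p p_gt0 (d l)) (sup_lt_0 p p_gt0 (d_gt0 l)).
  exact: gaps_unbounded gaps_i.
pose c := (Num.truncn eps^-1).+2.
have c_eps : c%:R^-1 < eps.
  rewrite -[eps]invrK ltf_pV2 ?posrE ?invr_gt0 ?ltr0n //.
  by rewrite -truncn_lt_nat ?invr_ge0 ?ltW.
have [n [m nmP]] := interleaved_seq (isT : (1 < c)%N) gaps_j unbounded_i.
have nm_interleaved l : (0 < n l < m l)%N /\ (m l < n l.+1)%N.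
  by have [] := nmP l.
have nm_ratio l : (0 < n l)%N /\ (c * n l <= m l <= K * c * n l)%N.
  by have [_ _ /andP[n_gt0 _] _ bounds] := nmP l.
have [ratio_inf ratio_sup] := ratio_liminf_gt0_limsup_le (R := R) (ltn0Sn _) nm_ratio.
have [pos [m_homo [n_homo [m_unb n_unb]]]] := interleaved_increasing nm_interleaved.
exists m, n; do 5!(split=> //); split=> //.
split; first by apply: (le_lt_trans ratio_sup); rewrite lte_fin.
apply: (Wprod_ratio_summable p p_gt0) => l.
have [Dn Am /andP[_ /ltnW nm] _ _] := nmP l.
by split; [exact: nm | exact: Dn | exact: Am].
Qed.
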